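(* Let $T$ and $\tilde T$ be positive integers, $\theta>0$ a firing threshold, and $\psi\in\mathbb{R}$ a shift. Consider a single neuron of the $l$-th layer whose input currents over $T$ time-steps form a vector $\mathbf{I}=(I^{1},\dots,I^{T})^{\top}\in\mathbb{R}^{T}$ with average $z=\frac{1}{T}\sum_{t=1}^{T}I^{t}$ (so $z$ plays the role of $\mathbf{W}^l\mathbf{r}^{(l-1),T}$). Define the parallel conversion matrix $\mathbf{\Lambda}_{\mathrm{pc}}\in\mathbb{R}^{T\times T}$ by $(\mathbf{\Lambda}_{\mathrm{pc}})_{x,j}=\frac{1}{T-x+1}$ for all $x,j\in\{1,\dots,T\}$, and the shift vector $$\mathbf{b}=\Big[\tfrac{\psi}{T},\ \dots,\ \tfrac{\psi}{T-x+1},\ \dots,\ \psi\Big]^{\top}\in\mathbb{R}^{T},\qquad b_x=\frac{\psi}{T-x+1}.$$ The parallel spike output is $\mathbf{s}\in\{0,1\}^{T}$ with $s_x=1$ if $(\mathbf{\Lambda}_{\mathrm{pc}}\mathbf{I}+\mathbf{b})_x\ge\theta$ and $s_x=0$ otherwise, and the SNN average firing rate is $r^{T}=\frac{\theta}{T}\sum_{x=1}^{T}s_x$. For a positive integer $N$ define the QCFS output $$r_{\mathrm{QCFS}}^{N}(z)=\frac{\theta}{N}\,\mathrm{Clip}\!\Big(\Big\lfloor\frac{zN+\psi}{\theta}\Big\rfloor,0,N\Big),$$ where $\mathrm{Clip}(a,0,N)=\min(\max(a,0),N)$. Then: (i) If $\tilde T=T$, then $r^{T}=r_{\mathrm{QCFS}}^{\tilde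 T}(z)$ for every input $\mathbf{I}\in\mathbb{R}^T$. (ii) If $\tilde T\neq T$ and $\psi=\theta/2$, and $z$ is a random variable uniformly distributed on $[0,\theta]$ (with $\mathbf{I}$ any input vector with average $z$), then $\mathbb{E}\big(r^{T}-r_{\mathrm{QCFS}}^{\tilde T}(z)\big)=0$.
   Context: In the converted spiking network, each spiking neuron layer computes all $T$ time-steps at once (''parallel inference''): the vector of membrane values is $\mathbf{\Lambda}_{\mathrm{pc}}\mathbf{I}+\mathbf{b}$ and a spike is emitted at step $x$ exactly when the $x$-th entry reaches the threshold $\theta$; there is no reset phase. The QCFS (Quantization-Clip-Floor-Shift) function with $N$ quantization levels is the ANN activation $r_{\mathrm{QCFS}}^{N}$ defined in the claim, applied to the pre-activation $z$. All statements are per neuron (elementwise for a layer). *)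

From HB Require Import structures.
From mathcomp Require Import all_boot all_order all_algebra.
From mathcomp Require Import all_classical all_reals all_analysis.
Set Implicit Arguments. Unset Strict Implicit. Unset Printing Implicit Defensive.
Import Order.TTheory GRing.Theory Num.Theory.
Local Open Scope ring_scope.

Section SNN.
Variable R : realType.

(* Indices are 0-based: row x : 'I_T stands for the paper's index x+1,
   so T - x + 1 (paper) becomes T - x here (always >= 1). *)

Definition Lambda_pc (T : nat) : 'M[R]_T :=
  \matrix_(x < T, j < T) ((T - x)%:R)^-1.

Definition shift_b (T : nat) (psi : R) : 'cV[R]_T :=
  \col_(x < T) (psi / (T - x)%:R).

Definition membrane (T : nat) (psi : R) (I : 'cV[R]_T) : 'cV[R]_T :=
  Lambda_pc T *m I + shift_b T psi.

Definition spike (T : nat) (theta psi : R) (I : 'cV[R]_T) (x : 'I_T) : bool :=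
  theta <= membrane psi I x 0.

Definition snn_rate (T : nat) (theta psi : R) (I : 'cV[R]_T) : R :=
  theta / T%:R * \sum_(x < T) (spike theta psi I x)%:R.

Definition avg_input (T : nat) (I : 'cV[R]_T) : R :=
  (T%:R)^-1 * \sum_(t < T) I t 0.

Definition clip (a : int) (N : nat) : int :=
  Num.min (Num.max a 0) (N%:Z).

Definition qcfs (N : nat) (theta psi z : R) : R :=
  theta / N%:R * (clip (Num.floor ((z * N%:R + psi) / theta)) N)%:~R.

End SNN.

From HB Require Import structures.
From mathcomp Require Import all_boot all_order all_algebra.
From mathcomp Require Import all_classical all_reals all_analysis.
From mathcomp Require Import measurable_realfun zify ring lra.
Import Order.TTheory GRing.Theory Num.Theory.
Local Open Scope classical_set_scope.
Local Open Scope ring_scope.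

(** Row [x] of [Lambda_pc I + b] equals [(T z + psi) / (T - x)], so the
  neuron fires at row [x] iff [(T - x) theta <= T z + psi]: the [T] rows test
  the [T] thresholds [k theta <= T z + psi], [k = 1..T], and the number passed
  is exactly the clipped floor of QCFS.  For (ii), with [psi = theta / 2] the
  QCFS output with [N] levels is a staircase of [N] steps of height [theta / N]
  at the points [(2k + 1) theta / (2N)]; its integral over [[0, theta]] is
  [theta^2 / 2] whatever [N] is, so the SNN and QCFS integrals cancel. *)

Lemma clip_floorE (R : archiRealDomainType) (a : R) (N : nat) :
  (clip (Num.floor a) N)%:~R = \sum_(k < N) (((k.+1)%:R <= a)%R)%:R :> R.
Proof.
elim: N => [|N IH].
  by rewrite big_ord0 /clip; have -> : Num.min (Num.max (Num.floor a) 0) 0 = 0 by lia.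
have clipS : clip (Num.floor a) N.+1
           = clip (Num.floor a) N + (((N.+1)%:Z <= Num.floor a)%R)%:R.
  by rewrite /clip; case: leP; lia.
by rewrite big_ord_recr /= -IH clipS intrD floor_ge_int; case: (_ <= a)%R.
Qed.

Lemma membraneE (R : realType) (T : nat) (psi : R) (I : 'cV[R]_T) (x : 'I_T) :
  membrane psi I x 0 = (\sum_(t < T) I t 0 + psi) / (T - x)%:R.
Proof.
rewrite /membrane !mxE mulrDl mulr_suml; congr (_ + _).
by apply: eq_bigr => j _; rewrite !mxE mulrC.
Qed.

Lemma snn_rate_qcfs (R : realType) (T : nat) (theta psi : R) (I : 'cV[R]_T) :
  (0 < T)%N -> 0 < theta ->
  snn_rate theta psi I = qcfs T theta psi (avg_input I).
Proof.
move=> T_gt0 theta_gt0; rewrite /snn_rate /qcfs clip_floorE; congr (_ * _).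
rewrite (reindex_inj rev_ord_inj); apply: eq_bigr => k _.
rewrite /spike membraneE /avg_input subKn // mulrAC mulVf ?pnatr_eq0 -?lt0n //.
by rewrite mul1r ler_pdivlMr ?ltr0Sn // mulrC -ler_pdivlMr.
Qed.

Definition qcfs_jump {R : realType} (N : nat) (theta : R) (k : nat) : R :=
  theta * (2 * k + 1)%:R / (2 * N)%:R.

Lemma qcfs_jump_itv (R : realType) (N k : nat) (theta : R) :
  (k < N)%N -> 0 < theta -> 0 <= qcfs_jump N theta k <= theta.
Proof.
move=> kN theta_gt0; have N_gt0 : (0 < N)%N by lia.
rewrite /qcfs_jump divr_ge0 ?mulr_ge0 ?(ltW theta_gt0) //=.
by rewrite ler_pdivrMr ?ltr0n ?muln_gt0 // ler_pM2l // ler_nat; lia.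
Qed.

Lemma qcfs_half_staircase (R : realType) (N : nat) (theta : R) :
  (0 < N)%N -> 0 < theta ->
  qcfs N theta (theta / 2)
  = fun z => theta / N%:R * \sum_(k < N) \1_(`[qcfs_jump N theta k, +oo[) z.
Proof.
move=> N_gt0 theta_gt0; apply/funext => z.
rewrite /qcfs clip_floorE; congr (_ * _); apply: eq_bigr => k _.
rewrite indicE /qcfs_jump mem_setE in_itv /= andbT.
have N_pos : 0 < N%:R :> R by rewrite ltr0n.
rewrite ler_pdivlMr // ler_pdivrMr ?ltr0n ?muln_gt0 // natrD !natrM -natr1 /=.
by congr (nat_of_bool _ )%:R; apply/idP/idP => ?; lra.
Qed.

Lemma measurable_staircase (R : realType) (N : nat) (h : R) (c : nat -> R) :
  measurable_fun setT (fun z : R => h * \sum_(k < N) \1_(`[c k, +oo[) z).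
Proof.
apply: measurable_funM => //.
by apply: measurable_sum => k; exact: measurable_indic.
Qed.

Lemma integral_indic_itv_ge (R : realType) (a b c : R) :
  b <= c -> c <= a ->
  (\int[lebesgue_measure]_(z in `[b, a]) (\1_(`[c, +oo[) z)%:E)%E = (a - c)%:E.
Proof.
move=> bc ca; rewrite integral_indic //.
have -> : `[c, +oo[ `&` `[b, a] = `[c, a]%classic :> set R.
  apply/seteqP; split => x /=; rewrite !in_itv /= ?andbT.
    by move=> [cx /andP[_ xa]]; rewrite cx xa.
  by move=> /andP[cx xa]; rewrite cx xa (le_trans bc cx).
have := lebesgue_measure_itv `[c, a]; rewrite /= lte_fin => ->.
case: ltP => [_|ac]; first by rewrite EFinB.
have -> : c = a by apply: le_anti; rewrite ca ac.
by rewrite subrr.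
Qed.

Lemma sum_qcfs_jump (R : realType) (N : nat) (theta : R) :
  (0 < N)%N -> \sum_(k < N) qcfs_jump N theta k = theta * N%:R / 2.
Proof.
move=> N_gt0; have N_neq0 : N%:R != 0 :> R by rewrite pnatr_eq0 -lt0n.
have sum_odd : (\sum_(k < N) (2 * k + 1) = N * N)%N.
  by elim: (N) => [|n IH]; rewrite ?big_ord0 // big_ord_recr /= IH; lia.
rewrite /qcfs_jump -mulr_suml -mulr_sumr -natr_sum sum_odd !natrM.
by field.
Qed.

Lemma integral_qcfs_half (R : realType) (N : nat) (theta : R) :
  (0 < N)%N -> 0 < theta ->
  (\int[lebesgue_measure]_(z in `[0%R, theta]%classic)
     (qcfs N theta (theta / 2) z)%:E)%E = (theta ^+ 2 / 2)%:E.
Proof.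
move=> N_gt0 theta_gt0; rewrite qcfs_half_staircase //.
have h_ge0 : 0 <= theta / N%:R by rewrite divr_ge0 ?(ltW theta_gt0).
under eq_integral do rewrite mulr_sumr -sumEFin.
rewrite ge0_integral_sum //; first last.
- by move=> k z _; rewrite lee_fin mulr_ge0.
- by move=> k; apply/measurable_EFinP/measurable_funM.
under eq_bigr => k _.
  under eq_integral do rewrite EFinM.
  rewrite ge0_integralZl_EFin //; last first.
    by apply/measurable_EFinP; exact: measurable_indic.
  have /andP[jump_ge0 jump_le] : 0 <= qcfs_jump N theta k <= theta.
    exact: qcfs_jump_itv.
  rewrite integral_indic_itv_ge // -EFinM.
  over.
rewrite sumEFin -mulr_sumr sumrB sumr_const card_ord sum_qcfs_jump //.
by congr (_%:E); field; rewrite pnatr_eq0 -lt0n.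
Qed.

Lemma integrable_qcfs_half (R : realType) (N : nat) (theta : R) :
  (0 < N)%N -> 0 < theta ->
  lebesgue_measure.-integrable `[0%R, theta]%classic
    (fun z => (qcfs N theta (theta / 2) z)%:E).
Proof.
move=> N_gt0 theta_gt0; apply/integrableP; split.
  by rewrite qcfs_half_staircase //; apply/measurable_EFinP/measurable_funTS;
    exact: measurable_staircase.
have qcfs_ge0 z : 0 <= qcfs N theta (theta / 2) z.
  rewrite qcfs_half_staircase // mulr_ge0 ?divr_ge0 ?(ltW theta_gt0) //.
  by apply: sumr_ge0 => k _; exact: ler0n.
under eq_integral do rewrite abse_EFin ger0_norm //.
by rewrite integral_qcfs_half // ltry.
Qed.

Theorem theorem4p1 (R : realType) (T Tt : nat) (theta psi : R) :
  (0 < T)%N -> (0 < Tt)%N -> 0 < theta ->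
  (* (i) *)
  (Tt = T -> forall I : 'cV[R]_T,
      snn_rate theta psi I = qcfs Tt theta psi (avg_input I))
  /\
  (* (ii): expectation over z ~ Uniform[0, theta], with I(z) any input of average z *)
  (Tt <> T -> psi = theta / 2 -> forall I : R -> 'cV[R]_T,
      (forall z : R, z \in `[0, theta] -> avg_input (I z) = z) ->
      ((theta^-1)%:E *
        \int[@lebesgue_measure R]_(z in `[0%R, theta]%classic)
           (snn_rate theta psi (I z) - qcfs Tt theta psi z)%:E)%E = 0%E).
Proof.
move=> T_gt0 Tt_gt0 theta_gt0; split=> [-> I|_ -> I avgI].
  exact: snn_rate_qcfs.
under eq_integral => z z_itv.
  rewrite snn_rate_qcfs // avgI ?EFinB; last by rewrite inE in z_itv.
  over.
rewrite integralB_EFin //; try exact: integrable_qcfs_half.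
by rewrite !integral_qcfs_half // subee // mule0.
Qed.
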